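(* Let $\mathcal{Q}(z)=t(z)^2-\det\mathcal{T}(z)$ and $\lambda=z^2+z^{-2}$. Then $\mathcal{Q}(z)=\mathcal{Q}_{2N}(\lambda)$ where $\mathcal{Q}_{2N}$ is a polynomial of degree $2N$ in $\lambda$ (whose coefficients are functions on the phase space $M_{2N}$).
   Context: $SL_2^*$ denotes the Poisson variety with coordinate ring $\mathbf{C}[e,f,k^{\pm1}]$ and Poisson brackets $\{k,e\}=ke$, $\{k,f\}=-kf$, $\{e,f\}=2(k^2-k^{-2})$; $\omega=k^2+k^{-2}+ef$ is a Casimir and $\Sigma_t=\{\omega=t\}$ is a symplectic leaf. Fix $N\ge1$, $t_1,\dots,t_N\in\mathbf{C}$, $\xi\in\mathbf{C}^*$, $a_1,\dots,a_N\in\mathbf{C}^*$. The phase space is $M_{2N}=\Sigma_{t_1}\times\cdots\times\Sigma_{t_N}$ with coordinates $(e_j,f_j,k_j)$ at site $j$. Set $L_j(z)=\begin{pmatrix} zk_j-z^{-1}k_j^{-1} & e_j\\ f_j & zk_j^{-1}-z^{-1}k_j\end{pmatrix}$, $K(z)=\begin{pmatrix}\xi z-z^{-1}\xi^{-1}&0\\0&\xi z^{-1}-z\xi^{-1}\end{pmatrix}$, the reflection monodromy matrix $\mathcal{T}(z)=\frac{1}{z-z^{-1}}L_1(a_1z)\cdots L_N(a_Nz)\,K(z)\,L_N(z/a_N)\cdots L_1(z/a_1)$, and $t(z)=\frac12\operatorname{tr}\mathcal{T}(z)$. *)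

(* Complex numbers: an arbitrary numClosedFieldType C
   (e.g. algC or complex R); the statement is a polynomial identity. *)
From HB Require Import structures.
From mathcomp Require Import all_boot all_order all_algebra.
Set Implicit Arguments. Unset Strict Implicit. Unset Printing Implicit Defensive.
Import Order.TTheory GRing.Theory Num.Theory.
Local Open Scope ring_scope.

Section Defs.
Variable C : numClosedFieldType.

Definition Lmat (e f k z : C) : 'M[C]_2 :=
  \matrix_(i < 2, j < 2)
    if (i == 0) && (j == 0) then z * k - z^-1 * k^-1
    else if (i == 0) && (j == 1) then e
    else if (i == 1) && (j == 0) then f
    else z * k^-1 - z^-1 * k.

Definition Kmat (xi z : C) : 'M[C]_2 :=
  \matrix_(i < 2, j < 2)
    if (i == 0) && (j == 0) then xi * z - z^-1 * xi^-1
    else if (i == 1) && (j == 1) then xi * z^-1 - z * xi^-1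
    else 0.

Definition Tmono (N : nat) (xi : C) (a e f k : 'I_N -> C) (z : C) : 'M[C]_2 :=
  (z - z^-1)^-1 *:
   ((\prod_(j < N) Lmat (e j) (f j) (k j) (a j * z)) *
    Kmat xi z *
    (\prod_(j < N) Lmat (e (rev_ord j)) (f (rev_ord j)) (k (rev_ord j))
                         (z / a (rev_ord j)))).

Definition tfun (N : nat) (xi : C) (a e f k : 'I_N -> C) (z : C) : C :=
  \tr (Tmono xi a e f k z) / 2.

Definition Qfun (N : nat) (xi : C) (a e f k : 'I_N -> C) (z : C) : C :=
  tfun xi a e f k z ^+ 2 - \det (Tmono xi a e f k z).

End Defs.

From HB Require Import structures.
From mathcomp Require Import all_boot all_order all_algebra.
From mathcomp Require Import ring.
Set Implicit Arguments. Unset Strict Implicit. Unset Printing Implicit Defensive.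
Import Order.TTheory GRing.Theory Num.Theory.
Local Open Scope ring_scope.

(* Write [λ = z² + z⁻²].  Conjugating by the pair [L(a z)], [L(z / a)] preserves
   the shape
     [[z α(λ) + z⁻¹ β(λ), (z² - z⁻²) b(λ)], [(z² - z⁻²) c(λ), z⁻¹ α(λ) + z β(λ)]]
   for polynomials α, β, b, c: all degrees grow by one and the top
   coefficients of α and β get multiplied by k² and k⁻².  Starting from K(z)
   (α = ξ, β = -ξ⁻¹, b = c = 0), the numerator of 𝒯(z) has this shape with
   deg α, β ≤ N and deg b, c ≤ N - 1, and top coefficients ξ K², -ξ⁻¹ K⁻² of
   α, β, where K = ∏ k_j.  As (z + z⁻¹)² = λ + 2 and (z - z⁻¹)² = λ - 2, one
   computes 𝒬 = (α - β)²/4 + (λ + 2) b c, of degree 2N in λ. *)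

Lemma ord2P (i : 'I_2) : i = 0 \/ i = 1.
Proof. by case: i => [[|[|//]] ?]; [left | right]; apply/val_inj. Qed.

Lemma mulmx2E (R : pzSemiRingType) (A B : 'M[R]_2) i j : (A * B) i j = A i 0 * B 0 j + A i 1 * B 1 j.
Proof.
rewrite -mulmxE mxE !big_ord_recl big_ord0 addr0.
by congr (A _ _ * B _ _ + A _ _ * B _ _); apply: val_inj.
Qed.

Lemma mxtrace2 (R : pzSemiRingType) (A : 'M[R]_2) : \tr A = A 0 0 + A 1 1.
Proof.
rewrite /mxtrace !big_ord_recl big_ord0 addr0.
by congr (A _ _ + A _ _); apply: val_inj.
Qed.

Lemma det_mx2 (R : comPzRingType) (A : 'M[R]_2) : \det A = A 0 0 * A 1 1 - A 0 1 * A 1 0.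
Proof.
rewrite (expand_det_row _ 0) !big_ord_recl big_ord0 addr0 /cofactor !det_mx11.
rewrite !mxE /= expr0 expr1 !mul1r mulN1r mulrN.
by congr (A _ _ * A _ _ - A _ _ * A _ _); apply: val_inj.
Qed.

Section SizeBounds.
Variable R : nzRingType.
Implicit Types p q : {poly R}.

Lemma poly_of_sizeS n p : p \is a poly_of_size n -> p \is a poly_of_size n.+1.
Proof. by rewrite !qualifE /=; apply: leqW. Qed.

Lemma mulX_poly_of_size n p : p \is a poly_of_size n -> 'X * p \is a poly_of_size n.+1.
Proof.
rewrite !qualifE /= -commr_polyX; have [->|p0] := eqVneq p 0.
  by rewrite mul0r size_poly0.
by rewrite size_mulX.
Qed.

Lemma coef_poly_of_size n p : p \is a poly_of_size n -> p`_n = 0.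
Proof. by rewrite qualifE /=; apply: nth_default. Qed.

Lemma coefXMD n p q : q \is a poly_of_size n.+1 -> ('X * p + q)`_n.+1 = p`_n.
Proof. by move=> /coef_poly_of_size q0; rewrite coefD coefXM q0 addr0. Qed.

Lemma mul_poly_of_size m n p q : p \is a poly_of_size m -> q \is a poly_of_size n ->
  p * q \is a poly_of_size (m + n)%N.-1.
Proof.
rewrite !qualifE /= => p_m q_n; apply: leq_trans (size_polyMleq p q) _.
by rewrite -!subn1 leq_sub2r // leq_add.
Qed.

Lemma coefM_top m n p q :
  p \is a poly_of_size m.+1 -> q \is a poly_of_size n.+1 ->
  (p * q)`_(m + n)%N = p`_m * q`_n.
Proof.
rewrite !qualifE /= => p_m q_n; rewrite coefM.
rewrite (bigD1 (Ordinal (leq_addr n m.+1))) //= addKn big1 ?addr0 // => j /eqP j_m.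
have [lt_jm | lt_mj | eq_jm] := ltngtP j m.
- by rewrite (nth_default _ (leq_trans q_n _)) ?mulr0 // ltn_subRL ltn_add2r.
- by rewrite (nth_default _ (leq_trans p_m _)) ?mul0r.
- by case: j_m; apply/val_inj.
Qed.

End SizeBounds.

Section LaxShape.
Variable C : numClosedFieldType.
Implicit Types (al be b c : {poly C}) (a e f k z : C).

Definition lam z := z ^+ 2 + z ^- 2.

Definition lam_mx al be b c z : 'M[C]_2 :=
  \matrix_(i < 2, j < 2)
   if (i == 0) && (j == 0) then z * al.[lam z] + z^-1 * be.[lam z]
   else if (i == 0) && (j == 1) then (z ^+ 2 - z ^- 2) * b.[lam z]
   else if (i == 1) && (j == 0) then (z ^+ 2 - z ^- 2) * c.[lam z]
   else z^-1 * al.[lam z] + z * be.[lam z].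

Section Dressing.
Variables (a e f k : C) (al be b c : {poly C}).

Definition dress_al : {poly C} :=
  'X * (k ^+ 2 *: al + (e * k / a) *: c + (f * a * k) *: b)
  + ((k ^+ 2 - k ^- 2 + e * f) *: be - (a ^+ 2 + a ^- 2) *: al
     - (2 * e * a / k) *: c - (2 * f / (a * k)) *: b).
Definition dress_be : {poly C} :=
  'X * (k ^- 2 *: be + (e * a / k) *: c + (f / (a * k)) *: b)
  + ((k ^- 2 - k ^+ 2 + e * f) *: al - (a ^+ 2 + a ^- 2) *: be
     - (2 * e * k / a) *: c - (2 * f * a * k) *: b).
Definition dress_b : {poly C} :=
  'X * b + ((e * a * k) *: al + (e / (a * k)) *: be + (e ^+ 2) *: c
            - (a ^+ 2 * k ^+ 2 + a ^- 2 * k ^- 2) *: b).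
Definition dress_c : {poly C} :=
  'X * c + ((f * k / a) *: al + (f * a / k) *: be + (f ^+ 2) *: b
            - (a ^+ 2 * k ^- 2 + a ^- 2 * k ^+ 2) *: c).

Lemma Lmat_lam_mx z : a != 0 -> k != 0 -> z != 0 ->
  Lmat e f k (a * z) * lam_mx al be b c z * Lmat e f k (z / a) =
  lam_mx dress_al dress_be dress_b dress_c z.
Proof.
move=> a0 k0 z0; apply/matrixP => i j; rewrite !mulmx2E.
case: (ord2P i) => ->; case: (ord2P j) => ->;
  rewrite !mxE /= /lam !(hornerD, hornerN, hornerZ, hornerM, hornerX);
  by field; rewrite a0 k0 z0.
Qed.

End Dressing.

Definition lam_shaped n (M : C -> 'M[C]_2) A B := exists al be b c : {poly C},
  [/\ [&& al \is a poly_of_size n.+1, be \is a poly_of_size n.+1,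
          b \is a poly_of_size n & c \is a poly_of_size n],
      al`_n = A, be`_n = B & forall z, z != 0 -> M z = lam_mx al be b c z].

Lemma lam_shaped_dress n M A B a e f k : a != 0 -> k != 0 -> lam_shaped n M A B ->
  lam_shaped n.+1 (fun z => Lmat e f k (a * z) * M z * Lmat e f k (z / a))
    (k ^+ 2 * A) (k ^- 2 * B).
Proof.
move=> a0 k0 [al [be [b [c [/and4P[al_n be_n b_n c_n] alA beB M_lam]]]]].
have [al_n1 be_n1] := (poly_of_sizeS al_n, poly_of_sizeS be_n).
have [b_n1 c_n1] := (poly_of_sizeS b_n, poly_of_sizeS c_n).
have [b_n2 c_n2] := (poly_of_sizeS b_n1, poly_of_sizeS c_n1).
exists (dress_al a e f k al be b c), (dress_be a e f k al be b c),
  (dress_b a e k al be b c), (dress_c a f k al be b c); split.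
- by apply/and4P; split; repeat (apply: rpredB || apply: rpredD || apply: rpredZ
    || apply: mulX_poly_of_size).
- rewrite /dress_al coefXMD; last by repeat (apply: rpredB || apply: rpredZ).
  by rewrite !coefD !coefZ (coef_poly_of_size b_n) (coef_poly_of_size c_n) alA !mulr0 !addr0.
- rewrite /dress_be coefXMD; last by repeat (apply: rpredB || apply: rpredZ).
  by rewrite !coefD !coefZ (coef_poly_of_size b_n) (coef_poly_of_size c_n) beB !mulr0 !addr0.
- by move=> z z0; rewrite M_lam // Lmat_lam_mx.
Qed.

Lemma lam_shaped_Kmat xi : lam_shaped 0 (Kmat xi) xi (- xi^-1).
Proof.
exists xi%:P, (- xi^-1)%:P, 0, 0; split.
- by rewrite !qualifE /= !size_polyC_leq1 size_poly0.
- by rewrite coefC.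
- by rewrite coefC.
move=> z z0; apply/matrixP => i j.
by case: (ord2P i) => ->; case: (ord2P j) => ->; rewrite !mxE /= ?hornerC ?horner0 ?mulr0 //;
  ring.
Qed.

Lemma lam_shaped_ext n M M' A A' B B' : (forall z, z != 0 -> M z = M' z) ->
  A = A' -> B = B' -> lam_shaped n M A B -> lam_shaped n M' A' B'.
Proof.
move=> MM' <- <- [al [be [b [c [sizes alA beB M_lam]]]]].
by exists al, be, b, c; split => // z z0; rewrite -MM' ?M_lam.
Qed.

Definition Qpoly al be b c : {poly C} := 4^-1 *: (al - be) ^+ 2 + ('X + 2%:P) * b * c.

Lemma Qpoly_lam_mx al be b c z : z != 0 -> z ^+ 2 != 1 ->
  let T := (z - z^-1)^-1 *: lam_mx al be b c z in
  (\tr T / 2) ^+ 2 - \det T = (Qpoly al be b c).[lam z].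
Proof.
move=> z0 z2 T; rewrite /T mxtraceZ detZ mxtrace2 det_mx2 !mxE /= /Qpoly /lam.
rewrite !(hornerD, hornerN, hornerZ, hornerM, hornerX, hornerC).
by field; rewrite z0 subr_eq0 -expr2 z2.
Qed.

Lemma Qpoly_top n al be b c :
  al \is a poly_of_size n.+1 -> be \is a poly_of_size n.+1 ->
  b \is a poly_of_size n -> c \is a poly_of_size n ->
  Qpoly al be b c \is a poly_of_size (n + n).+1 /\
  (Qpoly al be b c)`_(n + n)%N = (al`_n - be`_n) ^+ 2 / 4.
Proof.
move=> al_n be_n b_n c_n; have ab_n : al - be \is a poly_of_size n.+1 by rewrite rpredB.
have X2_2 : ('X + 2%:P : {poly C}) \is a poly_of_size 2%N.
  by rewrite qualifE /= size_XaddC.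
have bc_2n : ('X + 2%:P) * b * c \is a poly_of_size (n + n)%N.
  by rewrite -[(n + n)%N]/((n.+1 + n)%N.-1) mul_poly_of_size ?(mul_poly_of_size X2_2).
split.
- apply: rpredD; last exact: poly_of_sizeS.
  by rewrite rpredZ // expr2 -addnS -[(n + n.+1)%N]/((n.+1 + n.+1)%N.-1) mul_poly_of_size.
- rewrite coefD coefZ (coef_poly_of_size bc_2n) addr0 expr2 (coefM_top ab_n ab_n).
  by rewrite coefB mulrC expr2.
Qed.

End LaxShape.

Definition refl_core (C : numClosedFieldType) N xi (a e f k : 'I_N -> C) z : 'M[C]_2 :=
  (\prod_(j < N) Lmat (e j) (f j) (k j) (a j * z)) * Kmat xi z *
  (\prod_(j < N) Lmat (e (rev_ord j)) (f (rev_ord j)) (k (rev_ord j))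
                       (z / a (rev_ord j))).

Lemma big_ord_rev_recl (R : Type) (idx : R) (op : Monoid.law idx) N (F : 'I_N.+1 -> R) :
  \big[op/idx]_(j < N.+1) F (rev_ord j) =
  op (\big[op/idx]_(j < N) F (lift ord0 (rev_ord j))) (F ord0).
Proof.
rewrite big_ord_recr /=; congr (op _ (F _)); last by apply/val_inj; rewrite /= subnn.
by apply: eq_bigr => j _; congr F; apply/val_inj; rewrite /= /bump /= add1n subnSK.
Qed.

Lemma refl_coreS (C : numClosedFieldType) N xi (a e f k : 'I_N.+1 -> C) z :
  refl_core xi a e f k z =
  Lmat (e ord0) (f ord0) (k ord0) (a ord0 * z) *
  refl_core xi (a \o lift ord0) (e \o lift ord0) (f \o lift ord0) (k \o lift ord0) z *
  Lmat (e ord0) (f ord0) (k ord0) (z / a ord0).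
Proof.
rewrite /refl_core big_ord_recl.
rewrite (big_ord_rev_recl _ (fun j => Lmat (e j) (f j) (k j) (z / a j))).
by rewrite !mulrA.
Qed.

Lemma lam_shaped_refl_core (C : numClosedFieldType) N xi (a e f k : 'I_N -> C) :
  (forall j, a j != 0) -> (forall j, k j != 0) ->
  lam_shaped N (refl_core xi a e f k)
    (xi * (\prod_(j < N) k j) ^+ 2) (- (xi^-1 * (\prod_(j < N) k j) ^- 2)).
Proof.
elim: N a e f k => [|N IH] a e f k a0 k0.
  apply: lam_shaped_ext (lam_shaped_Kmat xi) => [z _||];
    by rewrite /refl_core ?big_ord0 ?mul1r ?mulr1 ?expr1n ?invr1 ?mulr1.
have := lam_shaped_dress (e ord0) (f ord0) (a0 ord0) (k0 ord0)
  (IH (a \o lift ord0) (e \o lift ord0) (f \o lift ord0) (k \o lift ord0)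
      (fun j => a0 _) (fun j => k0 _)).
apply: lam_shaped_ext => [z _||] /=; first by rewrite refl_coreS.
- by rewrite big_ord_recl exprMn; ring.
- by rewrite big_ord_recl exprMn !invfM; ring.
Qed.

Theorem mainTheorem4 (C : numClosedFieldType) (N : nat)
    (tt : 'I_N -> C) (xi : C) (a : 'I_N -> C) (e f k : 'I_N -> C) :
  (0 < N)%N -> xi != 0 -> (forall j, a j != 0) ->
  (forall j, k j != 0) ->
  (forall j, k j ^+ 2 + (k j)^-2 + e j * f j = tt j) ->
  exists P : {poly C},
    [/\ (size P <= (2 * N).+1)%N,
        P`_(2 * N) = (xi * (\prod_(j < N) k j) ^+ 2
                      + xi^-1 * (\prod_(j < N) k j) ^- 2) ^+ 2 / 4
      & forall z : C, z != 0 -> z ^+ 2 != 1 ->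
          Qfun xi a e f k z = P.[z ^+ 2 + z ^- 2]].
Proof.
(* Neither [0 < N], [xi != 0] nor the Casimir values are needed: the identity
   holds for all nonzero [a j], [k j] and arbitrary [e j], [f j]. *)
move=> _ _ a0 k0 _.
have [al [be [b [c [/and4P[al_N be_N b_N c_N] alA beB M_lam]]]]] :=
  lam_shaped_refl_core xi e f a0 k0.
have [Q_size Q_top] := Qpoly_top al_N be_N b_N c_N.
exists (Qpoly al be b c); rewrite mul2n -addnn; split => //.
  by rewrite Q_top alA beB opprK.
move=> z z0 z2; rewrite /Qfun /tfun /Tmono -/(refl_core xi a e f k z) M_lam //.
exact: Qpoly_lam_mx.
Qed.
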